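(* Let $\eta$ be a Poisson point process on a $\sigma$-finite measure space $(\mathbb{U},\mathcal{U},\mu)$ with intensity $\mu$. For every $p\ge2$ there is $c_p$, depending only on $p$, such that for every $\mathfrak F\in L^p_\eta$, $$\mathbb{E}\int_{\mathbb{U}}\big(D_u|\mathfrak F|^{p/2}\big)^2\,\mu(du)\le c_p\Big(\mathbb{E}\int_{\mathbb{U}}|D_u\mathfrak F|^p\,\mu(du)+\mathbb{E}\Big(\int_{\mathbb{U}}(D_u\mathfrak F)^2\,\mu(du)\Big)^{p/2}\Big)+\tfrac12\mathbb{E}|\mathfrak F|^p.$$
   Context: $L^p_\eta$ denotes the random variables of the form $f(\eta)$, with $f$ a measurable function on the space of $\{0,1,\dots,\infty\}$-valued $\sigma$-finite measures on $\mathbb{U}$, having finite $p$-th moment. The difference operator is $(D_u\mathfrak F)(\eta)=\mathfrak F(\eta+\delta_u)-\mathfrak F(\eta)$. *)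

From HB Require Import structures.
From mathcomp Require Import all_boot all_order all_algebra.
From mathcomp Require Import all_classical all_reals all_analysis measurable_realfun.
Set Implicit Arguments. Unset Strict Implicit. Unset Printing Implicit Defensive.
Import Order.TTheory GRing.Theory Num.Theory.
Local Open Scope classical_set_scope.
Local Open Scope ring_scope.

Section PoissonDefs.
Context {R : realType} {d : measure_display} (T : measurableType d).

(** A configuration: a set function on T (the point-process realisations
    live in the subclass [is_Nmeasure]). *)
Definition config := set T -> \bar R.

Definition eval_gen : set (set config) :=
  [set S | exists (A : set T) (B : set (\bar R)),
     [/\ measurable A, measurable B & S = (fun nu : config => nu A) @^-1` B]].

Definition config_measurable_fun (f : config -> R) : Prop :=
  forall B : set R, measurable B -> <<s eval_gen >> (f @^-1` B).

Definition is_Nmeasure (nu : config) : Prop :=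
  [/\ nu set0 = 0%E,
      (forall A, measurable A -> nu A = +oo%E \/ exists n : nat, nu A = n%:R%:E),
      semi_sigma_additive nu &
      exists F : (set T)^nat,
        [/\ (forall i, measurable (F i)), \bigcup_i F i = setT &
            forall i, (nu (F i) < +oo)%E]].

Definition add_dirac (nu : config) (u : T) : config :=
  fun A => (nu A + (\1_A u)%:E)%E.

Definition Dop (f : config -> R) (nu : config) (u : T) : R :=
  f (add_dirac nu u) - f nu.

Definition poisson_process (mu : {measure set T -> \bar R})
  {dO : measure_display} {Omega : measurableType dO}
  (P : probability Omega R) (eta : Omega -> config) : Prop :=
  [/\ (forall w, is_Nmeasure (eta w)),
      (forall A, measurable A -> measurable_fun setT (fun w => eta w A)),
      (forall A, measurable A ->
         match mu A with
         | EFin r => forall n : nat,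
             P [set w | eta w A = n%:R%:E] =
               ((r ^+ n / (n`!)%:R) * expR (- r))%:E
         | _ => P [set w | eta w A = +oo%E] = 1%E
         end) &
      (forall (n : nat) (A : 'I_n -> set T) (B : 'I_n -> set (\bar R)),
         (forall i, measurable (A i)) ->
         (forall i j, i != j -> A i `&` A j = set0) ->
         (forall i, measurable (B i)) ->
         P (\bigcap_i ((fun w => eta w (A i)) @^-1` B i)) =
           (\prod_(i < n) P ((fun w => eta w (A i)) @^-1` B i))%E)].

End PoissonDefs.

From HB Require Import structures.
From mathcomp Require Import all_boot all_order all_algebra.
From mathcomp Require Import all_classical all_reals all_analysis measurable_realfun.
From mathcomp Require Import ring lra.
Set Implicit Arguments. Unset Strict Implicit. Unset Printing Implicit Defensive.
Import Order.TTheory GRing.Theory Num.Theory.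
Local Open Scope classical_set_scope.
Local Open Scope ring_scope.
(* The inequality holds for every realisation of [eta].  For reals [a], [b],
   the tangent-line bound for the convex map [x |-> x^(p/2)] gives
     (|b|^(p/2) - |a|^(p/2))^2 <= K (|b - a|^p + |a|^(p-2) (b - a)^2).
   Take [a = F(eta)], [b = F(eta + delta_u)] and integrate in [u]: the cross
   term [K |a|^(p-2) \int (D_u F)^2] is split by Young's inequality with the
   exponents [p/(p-2)] and [p/2] into [|a|^p / 2 + C (\int (D_u F)^2)^(p/2)].
   Integrating over the probability space gives the claim with [c = K + C]. *)

Section PowRInequalities.
Variable R : realType.
Implicit Types (s q p K a b m M x y h : R).

Lemma powR_sub_le_tangent s m M : 1 <= s -> 0 <= m -> m <= M ->
  M `^ s - m `^ s <= s * M `^ (s - 1) * (M - m).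
Proof.
move=> s1 m0 mM; have M0 : 0 <= M := le_trans m0 mM.
have [->|s_neq1] := eqVneq s 1; first by rewrite !powRr1 // subrr powRr0 !mul1r.
have s1_gt0 : 0 < s - 1 by rewrite subr_gt0 lt_neqAle eq_sym s_neq1.
have s0 : 0 < s by lra.
have young : m * M `^ (s - 1) <= m `^ s / s + M `^ s / (s / (s - 1)).
  have := @conjugate_powR R m (M `^ (s - 1)) s (s / (s - 1)) m0 (powR_ge0 _ _) s0
    (divr_gt0 s0 s1_gt0).
  rewrite -powRrM (_ : (s - 1) * (s / (s - 1)) = s); last by field; rewrite gt_eqF.
  by apply; field; rewrite !gt_eqF.
have {}young : s * (m * M `^ (s - 1)) <= m `^ s + (s - 1) * M `^ s.
  rewrite -(ler_pM2l s0) in young; apply: (le_trans young).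
  by rewrite le_eqVlt; apply/orP; left; apply/eqP; field; rewrite !gt_eqF.
rewrite mulrBr -mulrA [M `^ (s - 1) * M]mulrC mulr_powRB1 //.
move: young; set Ms := M `^ (s - 1); set Mp := M `^ s; set mp := m `^ s; lra.
Qed.

Lemma powR_dist_le s x y h : 1 <= s -> 0 <= x -> 0 <= y -> `|x - y| <= h ->
  `|x `^ s - y `^ s| <= s * (y + h) `^ (s - 1) * h.
Proof.
move=> s1 x0 y0 xyh; have h0 : 0 <= h := le_trans (normr_ge0 _) xyh.
have base_le z : 0 <= z -> z <= y + h -> z `^ (s - 1) <= (y + h) `^ (s - 1).
  by move=> z0 zyh; apply: ge0_ler_powR; rewrite ?nnegrE ?subr_ge0 ?addr_ge0.
have s0 : 0 < s by lra.
have [yx|xy] := leP y x.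
  have yx_s : y `^ s <= x `^ s by apply: ge0_ler_powR; rewrite ?nnegrE //; lra.
  rewrite (@ger0_norm _ (x `^ s - y `^ s)) ?subr_ge0 //.
  apply: (le_trans (powR_sub_le_tangent s1 y0 yx)).
  move: xyh; rewrite ger0_norm ?subr_ge0 // => xyh.
  apply: ler_pM; rewrite ?mulr_ge0 ?powR_ge0 ?subr_ge0 //; try lra.
  by rewrite ler_pM2l // base_le //; lra.
have xy_s : x `^ s <= y `^ s by apply: ge0_ler_powR; rewrite ?nnegrE //; lra.
rewrite (@ler0_norm _ (x `^ s - y `^ s)) ?subr_le0 // opprB.
apply: (le_trans (powR_sub_le_tangent s1 x0 (ltW xy))).
move: xyh; rewrite ltr0_norm ?subr_lt0 // opprB => xyh.
apply: ler_pM; rewrite ?mulr_ge0 ?powR_ge0 ?subr_ge0 //; try lra.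
by rewrite ler_pM2l // base_le //; lra.
Qed.

Lemma powRD_le q y h : 0 <= q -> 0 <= y -> 0 <= h ->
  (y + h) `^ q <= 2 `^ q * (y `^ q + h `^ q).
Proof.
move=> q0 y0 h0.
suff [M [M0 yM hM MyH]] : exists M, [/\ 0 <= M, y <= M, h <= M
    & M `^ q <= y `^ q + h `^ q].
  apply: (@le_trans _ _ ((2 * M) `^ q)).
    by apply: ge0_ler_powR; rewrite ?nnegrE ?addr_ge0 ?mulr_ge0 //; lra.
  by rewrite powRM // ler_pM2l ?powR_gt0.
have [yh|hy] := leP y h.
  by exists h; split => //; rewrite lerDr powR_ge0.
by exists y; split; rewrite ?(ltW hy) //; rewrite lerDl powR_ge0.
Qed.

Definition sqr_diff_const p : R := (p / 2) ^+ 2 * 2 `^ (p - 2).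

Lemma sqr_diff_const_gt0 p : 2 <= p -> 0 < sqr_diff_const p.
Proof. by move=> p2; rewrite mulr_gt0 ?powR_gt0 ?exprn_gt0 ?divr_gt0 //; lra. Qed.

Lemma sqr_sub_powR_norm_le p a b : 2 <= p ->
  (`|b| `^ (p / 2) - `|a| `^ (p / 2)) ^+ 2 <=
  sqr_diff_const p * (`|b - a| `^ p + `|a| `^ (p - 2) * (b - a) ^+ 2).
Proof.
move=> p2; set y := `|a|; set h := `|b - a|.
have s1 : 1 <= p / 2 by rewrite ler_pdivlMr // mul1r.
have tangent := powR_dist_le s1 (normr_ge0 b) (normr_ge0 a) (ler_dist_dist b a).
have sq_tangent : (`|b| `^ (p / 2) - y `^ (p / 2)) ^+ 2
    <= (p / 2) ^+ 2 * (y + h) `^ (p - 2) * h ^+ 2.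
  rewrite -real_normK ?num_real //; apply: le_trans (lerXn2r _ _ _ tangent) _.
  - by rewrite nnegrE.
  - by rewrite nnegrE !mulr_ge0 ?powR_ge0 ?normr_ge0 //; lra.
  have sqr_base : ((y + h) `^ (p / 2 - 1)) ^+ 2 = (y + h) `^ (p - 2).
    by rewrite -powR_mulrn ?powR_ge0 // -powRrM; congr (_ `^ _); field.
  by rewrite !exprMn sqr_base.
apply: (le_trans sq_tangent).
have hp : h `^ (p - 2) * h ^+ 2 = h `^ p.
  rewrite -powR_mulrn ?normr_ge0 // -powRD; first by congr (_ `^ _); ring.
  by apply/implyP => /eqP; lra.
rewrite -hp real_normK ?num_real //.
rewrite (_ : sqr_diff_const p * _ = (p / 2) ^+ 2
    * (2 `^ (p - 2) * (y `^ (p - 2) + h `^ (p - 2))) * (b - a) ^+ 2); last first.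
  by rewrite /sqr_diff_const; ring.
apply: ler_wpM2r; first exact: sqr_ge0.
apply: ler_wpM2l; first by apply: exprn_ge0; lra.
by apply: powRD_le; rewrite ?normr_ge0 //; lra.
Qed.

Definition young_const p K : R := K * (2 * K) `^ ((p - 2) / 2).

Lemma young_const_gt0 p K : 0 < K -> 0 < young_const p K.
Proof. by move=> K0; rewrite mulr_gt0 // powR_gt0 // mulr_gt0. Qed.

Lemma young_split p K a x : 2 <= p -> 0 < K -> 0 <= a -> 0 <= x ->
  K * a `^ (p - 2) * x <= 2^-1 * a `^ p + young_const p K * x `^ (p / 2).
Proof.
move=> p2 K0 a0 x0; set r := (p - 2) / 2.
have r0 : 0 <= r by rewrite divr_ge0 //; lra.
have half_ge0 : 0 <= 2^-1 * a `^ p by rewrite mulr_ge0 ?powR_ge0 // invr_ge0.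
have C_ge0 : 0 <= young_const p K * x `^ (p / 2).
  by rewrite mulr_ge0 ?powR_ge0 // ltW // young_const_gt0.
(* Either [a^2 <= 2 K x], and the left side is controlled by [x^(p/2)], or
   [2 K x < a^2], and it is at most half of [a^p]. *)
have [small|large] := leP (a `^ 2) (2 * K * x).
  apply: (@le_trans _ _ (young_const p K * x `^ (p / 2))); last by rewrite lerDr.
  rewrite (_ : a `^ (p - 2) = (a `^ 2) `^ r); last by rewrite -powRrM /r; congr (_ `^ _); field.
  rewrite (_ : x `^ (p / 2) = x `^ r * x); last first.
    rewrite -{3}(powRr1 x0) -powRD; first by congr (_ `^ _); rewrite /r; field.
    by apply/implyP => /eqP; rewrite /r; lra.
  rewrite /young_const -!mulrA ler_pM2l // mulrA ler_wpM2r //.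
  rewrite -powRM ?mulr_ge0 //; try lra.
  by apply: ge0_ler_powR; rewrite ?nnegrE ?powR_ge0 ?mulr_ge0 //; lra.
apply: (@le_trans _ _ (2^-1 * a `^ p)); last by rewrite lerDl.
rewrite (_ : a `^ p = a `^ (p - 2) * a `^ 2); last first.
  rewrite -powRD; first by congr (_ `^ _); ring.
  by apply/implyP => /eqP; lra.
have := powR_ge0 a (p - 2); set Q := a `^ (p - 2) => Q0; nra.
Qed.

Lemma young_splitE p K a (X : \bar R) : 2 <= p -> 0 < K -> 0 <= a -> (0 <= X)%E ->
  ((K * a `^ (p - 2))%:E * X
    <= (2^-1)%:E * (a `^ p)%:E + (young_const p K)%:E * X `^ (p / 2))%E.
Proof.
move=> p2 K0 a0; case: X => [x| |] // x0.
  by rewrite poweR_EFin -!EFinM -EFinD lee_fin young_split // -lee_fin.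
rewrite poweRyr; last by rewrite gt_eqF // divr_gt0 //; lra.
by rewrite (@gt0_muley _ (young_const p K)%:E) ?lte_fin ?young_const_gt0 // addey ?leey.
Qed.

End PowRInequalities.

Lemma measurable_powR_norm (R : realType) dX (X : measurableType dX) (g : X -> R) s :
  measurable_fun setT g -> measurable_fun setT (fun x => `|g x| `^ s).
Proof.
by move=> mg; apply: measurableT_comp (@measurable_powR R _) _;
  apply: measurableT_comp (@normr_measurable R setT) mg.
Qed.

Section ConfigMeasurability.
Context (R : realType) (d : measure_display) (T : measurableType d).
Context dX (X : measurableType dX) (eta : X -> @config R d T).
Hypothesis eta_eval : forall A, measurable A -> measurable_fun setT (fun x => eta x A).

(* The sets of configurations with a measurable preimage under [eta] form a
   sigma-algebra containing the generators [eval_gen]. *)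
Lemma config_measurable_comp (f : config T -> R) :
  config_measurable_fun f -> measurable_fun setT (f \o eta).
Proof.
move=> mf _ B mB; rewrite setTI comp_preimage.
apply: (mf B mB [set S | measurable (eta @^-1` S)]); split.
- split => /=.
  + by rewrite preimage_set0.
  + by move=> S mS; rewrite setTD -preimage_setC; exact: measurableC.
  + by move=> F mF; rewrite preimage_bigcup; exact: bigcupT_measurable.
- move=> _ [A [E [mA mE ->]]] /=.
  by have := eta_eval mA measurableT mE; rewrite setTI.
Qed.

Lemma measurable_add_dirac_eval A : measurable A ->
  measurable_fun setT (fun z : X * T => add_dirac (eta z.1) z.2 A).
Proof.
move=> mA; apply: emeasurable_funD.
  exact: measurableT_comp (eta_eval mA) measurable_fst.
apply/measurable_EFinP; apply: measurableT_comp _ measurable_snd.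
exact: measurable_indic.
Qed.

End ConfigMeasurability.

Section SigmaFiniteFubini.
Context (R : realType) d (T : measurableType d) dO (O : measurableType dO).
Variables (mu : {measure set T -> \bar R}) (mu_sigma_finite : sigma_finite setT mu).

(* A copy of [mu] carrying the sigma-finite measure structure that the
   Fubini-Tonelli lemmas require. *)
Let mu_sf : set T -> \bar R := mu.
HB.instance Definition _ := Measure.on mu_sf.
HB.instance Definition _ := Measure_isSigmaFinite.Build _ _ _ mu_sf mu_sigma_finite.

Lemma measurable_fun_integral_snd (g : O * T -> \bar R) : measurable_fun setT g ->
  (forall z, (0 <= g z)%E) -> measurable_fun setT (fun w => \int[mu]_u g (w, u))%E.
Proof. exact: (@measurable_fun_fubini_tonelli_F _ _ _ _ _ mu_sf). Qed.

End SigmaFiniteFubini.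

Definition dop_const (R : realType) (p : R) : R :=
  sqr_diff_const p + young_const p (sqr_diff_const p).

Lemma dop_const_ge0 (R : realType) (p : R) : 2 <= p -> 0 <= dop_const p.
Proof.
move=> p2; have K0 := sqr_diff_const_gt0 p2.
by rewrite addr_ge0 ?ltW ?young_const_gt0.
Qed.

Section IntegralBounds.
Context (R : realType).
Local Open Scope ereal_scope.

Lemma integral_sqr_sub_powR_norm_le d (T : measurableType d)
    (mu : {measure set T -> \bar R}) (p a : R) (b : T -> R) :
  (2 <= p)%R -> measurable_fun setT b ->
  \int[mu]_u ((`|b u| `^ (p / 2) - `|a| `^ (p / 2)) ^+ 2)%:E
  <= (dop_const p)%:E * \int[mu]_u (`|b u - a| `^ p)%:E
     + (dop_const p)%:E * (\int[mu]_u ((b u - a) ^+ 2)%:E) `^ (p / 2)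
     + (2^-1)%:E * (`|a| `^ p)%:E.
Proof.
move=> p2 mb; set K := sqr_diff_const p; set C := young_const p K.
have K0 : (0 < K)%R := sqr_diff_const_gt0 p2.
have C0 : (0 < C)%R := young_const_gt0 p K0.
have mba : measurable_fun setT (fun u => b u - a)%R by apply: measurable_funB.
set A := \int[mu]_u (`|b u - a| `^ p)%:E; set X := \int[mu]_u ((b u - a) ^+ 2)%:E.
have A0 : 0 <= A by apply: integral_ge0 => u _; rewrite lee_fin powR_ge0.
have X0 : 0 <= X by apply: integral_ge0 => u _; rewrite lee_fin sqr_ge0.
have pointwise : \int[mu]_u ((`|b u| `^ (p / 2) - `|a| `^ (p / 2)) ^+ 2)%:E
    <= K%:E * A + (K * `|a| `^ (p - 2))%:E * X.
  have KA0 : (0 <= K * `|a| `^ (p - 2))%R by rewrite mulr_ge0 ?powR_ge0 // ltW.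
  have mA : measurable_fun setT (fun u => (`|b u - a| `^ p)%:E).
    by apply/measurable_EFinP; exact: measurable_powR_norm.
  have mX : measurable_fun setT (fun u => ((b u - a) ^+ 2)%:E).
    by apply/measurable_EFinP; exact: measurable_funX.
  have A_ge0 u : setT u -> 0 <= (`|b u - a| `^ p)%:E by rewrite lee_fin powR_ge0.
  have X_ge0 u : setT u -> 0 <= ((b u - a) ^+ 2)%:E by rewrite lee_fin sqr_ge0.
  rewrite /A /X -(ge0_integralZl_EFin _ _ A_ge0 mA (ltW K0)) //.
  rewrite -(ge0_integralZl_EFin _ _ X_ge0 mX KA0) //.
  rewrite -ge0_integralD //; last 4 first.
  - by move=> u _; rewrite -EFinM lee_fin mulr_ge0 ?powR_ge0 // ltW.
  - exact: measurable_funeM.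
  - by move=> u _; rewrite -EFinM lee_fin mulr_ge0 ?sqr_ge0.
  - exact: measurable_funeM.
  apply: ge0_le_integral => //.
  - by move=> u _; rewrite lee_fin sqr_ge0.
  - apply/measurable_EFinP; apply: measurable_funX; apply: measurable_funB => //.
    exact: measurable_powR_norm.
  - by apply: emeasurable_funD; exact: measurable_funeM.
  move=> u _; rewrite -!EFinM -EFinD lee_fin.
  by have := sqr_sub_powR_norm_le a (b u) p2; rewrite mulrDr mulrA.
apply: (le_trans pointwise); rewrite -addeA leeD //.
  by apply: lee_wpmul2r => //; rewrite lee_fin lerDl ltW.
apply: le_trans (young_splitE p2 K0 (normr_ge0 a) X0) _.
rewrite addeC leeD //.
by apply: lee_wpmul2r; rewrite ?poweR_ge0 // lee_fin lerDr ltW.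
Qed.

Lemma ge0_le_integral_lincomb dO (O : measurableType dO) (nu : {measure set O -> \bar R})
    (L A B G : O -> \bar R) (c h : R) :
  (0 <= c)%R -> (0 <= h)%R ->
  measurable_fun setT L -> measurable_fun setT A ->
  measurable_fun setT B -> measurable_fun setT G ->
  (forall w, 0 <= L w) -> (forall w, 0 <= A w) ->
  (forall w, 0 <= B w) -> (forall w, 0 <= G w) ->
  (forall w, L w <= c%:E * A w + c%:E * B w + h%:E * G w) ->
  \int[nu]_w L w <= c%:E * (\int[nu]_w A w + \int[nu]_w B w) + h%:E * \int[nu]_w G w.
Proof.
move=> c0 h0 mL mA mB mG L0 A0 B0 G0 LABG.
have c0E : 0 <= c%:E by rewrite lee_fin.
have h0E : 0 <= h%:E by rewrite lee_fin.
have mcA := measurable_funeM c%:E mA; have mcB := measurable_funeM c%:E mB.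
have mhG := measurable_funeM h%:E mG.
have cA0 w : setT w -> 0 <= c%:E * A w by move=> _; rewrite mule_ge0.
have cB0 w : setT w -> 0 <= c%:E * B w by move=> _; rewrite mule_ge0.
have hG0 w : setT w -> 0 <= h%:E * G w by move=> _; rewrite mule_ge0.
have cAB0 w : setT w -> 0 <= c%:E * A w + c%:E * B w.
  by move=> _; rewrite adde_ge0 ?cA0 ?cB0.
rewrite ge0_muleDr ?integral_ge0 //.
rewrite -(ge0_integralZl nu measurableT mA (fun w _ => A0 w) c0E).
rewrite -(ge0_integralZl nu measurableT mB (fun w _ => B0 w) c0E).
rewrite -(ge0_integralZl nu measurableT mG (fun w _ => G0 w) h0E).
rewrite -(ge0_integralD nu measurableT cA0 mcA cB0 mcB).
rewrite -(ge0_integralD nu measurableT cAB0 (emeasurable_funD mcA mcB) hG0 mhG).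
apply: ge0_le_integral => //.
exact: emeasurable_funD (emeasurable_funD mcA mcB) mhG.
Qed.

End IntegralBounds.

Section IteratedBound.
Context (R : realType) d (T : measurableType d) dO (O : measurableType dO).
Variables (mu : {measure set T -> \bar R}) (mu_sigma_finite : sigma_finite setT mu).
Variable nu : {measure set O -> \bar R}.
Local Open Scope ereal_scope.

Lemma integral_integral_sqr_sub_powR_norm_le (p : R) (a : O -> R) (b : O * T -> R) :
  (2 <= p)%R -> measurable_fun setT a -> measurable_fun setT b ->
  \int[nu]_w \int[mu]_u ((`|b (w, u)| `^ (p / 2) - `|a w| `^ (p / 2)) ^+ 2)%:E
  <= (dop_const p)%:E * (\int[nu]_w \int[mu]_u (`|b (w, u) - a w| `^ p)%:E
         + \int[nu]_w (\int[mu]_u ((b (w, u) - a w) ^+ 2)%:E) `^ (p / 2))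
     + (2^-1)%:E * \int[nu]_w (`|a w| `^ p)%:E.
Proof.
move=> p2 ma mb.
have ma1 : measurable_fun setT (fun z : O * T => a z.1) := measurableT_comp ma measurable_fst.
have mba : measurable_fun setT (fun z : O * T => b z - a z.1)%R by apply: measurable_funB.
have mint (g : O * T -> R) : measurable_fun setT g -> (forall z, 0 <= g z)%R ->
    measurable_fun setT (fun w => \int[mu]_u (g (w, u))%:E).
  move=> mg g0; apply: (measurable_fun_integral_snd mu_sigma_finite
    (g := fun z => (g z)%:E)); first exact/measurable_EFinP.
  by move=> z; rewrite lee_fin.
have mX := mint _ (measurable_funX 2 mba) (fun z => sqr_ge0 _).
apply: ge0_le_integral_lincomb.
- exact: dop_const_ge0.
- by rewrite invr_ge0.
- apply: (mint (fun z => (`|b z| `^ (p / 2) - `|a z.1| `^ (p / 2)) ^+ 2)%R) => [|z].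
    by apply/measurable_funX/measurable_funB; exact: measurable_powR_norm.
  exact: sqr_ge0.
- exact: (mint _ (measurable_powR_norm p mba) (fun z => powR_ge0 _ _)).
- exact: measurableT_comp (measurable_poweR _) mX.
- by apply/measurable_EFinP; exact: measurable_powR_norm.
- by move=> w; apply: integral_ge0 => u _; rewrite lee_fin sqr_ge0.
- by move=> w; apply: integral_ge0 => u _; rewrite lee_fin powR_ge0.
- by move=> w; exact: poweR_ge0.
- by move=> w; rewrite lee_fin powR_ge0.
move=> w; apply: integral_sqr_sub_powR_norm_le => //.
exact: measurableT_comp mb (pair1_measurable w).
Qed.

End IteratedBound.

Theorem mainTheorem3 (R : realType) (p : R) : 2 <= p ->
  exists c : R,
  forall (d : measure_display) (T : measurableType d)
         (mu : {measure set T -> \bar R}),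
  sigma_finite setT mu ->
  forall (dO : measure_display) (Omega : measurableType dO)
         (P : probability Omega R) (eta : Omega -> config T),
  poisson_process mu P eta ->
  forall f : config T -> R,
  config_measurable_fun f ->
  (\int[P]_w (`|f (eta w)| `^ p)%:E < +oo)%E ->
  (\int[P]_w \int[mu]_u
      ((Dop (fun nu => `|f nu| `^ (p / 2)) (eta w) u) ^+ 2)%:E
   <= c%:E * (\int[P]_w \int[mu]_u (`|Dop f (eta w) u| `^ p)%:E
              + \int[P]_w ((\int[mu]_u ((Dop f (eta w) u) ^+ 2)%:E) `^ (p / 2)))
      + (2^-1)%:E * \int[P]_w (`|f (eta w)| `^ p)%:E)%E.
Proof.
move=> p2; exists (dop_const p) => d T mu mu_sf dO Omega P eta [_ eta_eval _ _] f mf _.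
have mf_eta := config_measurable_comp eta_eval mf.
have mf_add := config_measurable_comp (measurable_add_dirac_eval eta_eval) mf.
exact: (integral_integral_sqr_sub_powR_norm_le mu_sf P p2 mf_eta mf_add).
Qed.
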